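(* Let $p,n\in\mathbb N$ with $p\ge n\ge 7$, and let $G\in Ex(p;T_n^2)$. If $G$ is connected, then $\Delta(G)=n-4$ and $e(G)=\big[\tfrac{(n-4)p}{2}\big]$.
   Context: All graphs are finite and simple; a graph ''contains'' $H$ if it has a subgraph isomorphic to $H$. $[x]$ denotes the greatest integer not exceeding $x$; $e(G)$ is the number of edges and $\Delta(G)$ the maximum degree of $G$. For a graph $L$ and $p\in\mathbb N$, $ex(p;L)$ is the maximum number of edges in a graph on $p$ vertices containing no copy of $L$, and $Ex(p;L)$ is the set of graphs on $p$ vertices containing no copy of $L$ and having exactly $ex(p;L)$ edges. For $n\ge 5$, $T_n^2$ is the tree with vertex set $\{v_0,\ldots,v_{n-1}\}$ and edge set $\{v_0v_1,\ldots,v_0v_{n-3},\,v_{n-3}v_{n-2},\,v_{n-3}v_{n-1}\}$. *)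

From mathcomp Require Import all_boot.
Set Implicit Arguments. Unset Strict Implicit. Unset Printing Implicit Defensive.

Definition simple_graph (p : nat) (g : rel 'I_p) : Prop :=
  symmetric g /\ irreflexive g.

Definition n_edges (p : nat) (g : rel 'I_p) : nat :=
  #|[set xy : 'I_p * 'I_p | g xy.1 xy.2 && (xy.1 < xy.2)%N]|.

Definition degree (p : nat) (g : rel 'I_p) (x : 'I_p) : nat :=
  #|[set y | g x y]|.

(* Delta(G): maximum degree (0 for the empty vertex set). *)
Definition max_degree (p : nat) (g : rel 'I_p) : nat :=
  \max_(x : 'I_p) degree g x.

Definition connected (p : nat) (g : rel 'I_p) : Prop :=
  forall x y : 'I_p, connect g x y.

Definition contains (p q : nat) (g : rel 'I_p) (h : rel 'I_q) : Prop :=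
  exists f : 'I_q -> 'I_p, injective f /\ forall i j, h i j -> g (f i) (f j).

Definition T2_arc (n : nat) (i j : 'I_n) : bool :=
  ((i == 0 :> nat) && (1 <= j <= n - 3)%N)
  || ((i == n - 3 :> nat) && ((j == n - 2 :> nat) || (j == n - 1 :> nat))).

Definition T2 (n : nat) : rel 'I_n := fun i j => T2_arc i j || T2_arc j i.

(* G in Ex(p;L): G is an L-free graph on p vertices with ex(p;L) edges,
   i.e. no L-free graph on p vertices has more edges than G. *)
Definition in_Ex (p q : nat) (L : rel 'I_q) (g : rel 'I_p) : Prop :=
  simple_graph g /\ ~ contains g L /\
  forall h : rel 'I_p, simple_graph h -> ~ contains h L -> n_edges h <= n_edges g.

Arguments T2 n : clear implicits.

(* Lower bound: the circulant graph on Z_p joining vertices at circular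
   distance at most (n-4)/2 (plus an antipodal matching when n-4 is odd) has
   maximum degree n-4 < n-3 = deg v_0 in T_n^2, hence is T_n^2-free, and has
   at least ((n-4)p - 1)/2 edges; so 2e(G) >= (n-4)p - 1.
   Upper bound on Delta(G): since T_n^2 is connected on n vertices, turning a
   set S of n-1 vertices into a clique keeps the graph T_n^2-free, so by
   extremality S meets at least C(n-1, 2) edges. A fork lemma (v, a neighbour
   u, two more neighbours of u and n-4 further neighbours of v span T_n^2)
   restricts the neighbours of a vertex v of maximum degree >= n-3, and in
   each case deg v >= n-1, = n-2, = n-3 gives n-1 vertices around v meeting
   too few edges. Hence Delta(G) <= n-4, and the handshake bound
   2e(G) <= p Delta(G) yields Delta(G) = n-4 and e(G) = [(n-4)p/2]. *)

From mathcomp Require Import all_boot zify.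
Set Implicit Arguments. Unset Strict Implicit. Unset Printing Implicit Defensive.

Lemma card_set_sum (T : finType) (P : pred T) : #|[set y | P y]| = \sum_y (P y : nat).
Proof. by rewrite -sum1dep_card big_mkcond; apply: eq_bigr => y _; case: (P y). Qed.

Lemma sum_split_set (T : finType) (S : {set T}) (F : T -> nat) :
  \sum_x F x = \sum_(x in S) F x + \sum_(x in ~: S) F x.
Proof. by rewrite (bigID (mem S)) /=; congr (_ + _); apply: eq_bigl => x; rewrite inE. Qed.

Lemma card_interval p a b : b <= p -> #|[set t : 'I_p | a <= t < b]| = b - a.
Proof.
move=> b_le; rewrite card_set_sum -(big_mkord xpredT (fun t => (a <= t < b) : nat)).
rewrite (big_cat_nat (leq0n b) b_le) /= [X in _ + X]big1_seq ?addn0; last first.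
  by move=> t /andP [_]; rewrite mem_index_iota => /andP [/leq_gtF ->]; rewrite andbF.
rewrite (eq_big_nat _ _ (F2 := fun t => (a <= t) : nat)); last first.
  by move=> t /andP [_ ->]; rewrite andbT.
elim: b {b_le} => [|b IHb]; first by rewrite big_geq.
by rewrite big_nat_recr //= IHb; case: leqP; lia.
Qed.

Lemma card_le3 (T : finType) (a b c : T) : #|[set a; b; c]| <= 3.
Proof. by rewrite cardsU cards2 cards1; case: (a != b); lia. Qed.

Lemma sum_le_with_exception (T : finType) (S : {set T}) (F : T -> nat) x0 b c :
  x0 \in S -> F x0 <= b -> (forall x, x \in S -> x != x0 -> F x <= c) ->
  \sum_(x in S) F x <= b + (#|S| - 1) * c.
Proof.
move=> x0S F_x0 F_le; rewrite (bigD1 x0) //= leq_add //.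
rewrite (cardsD1 x0 S) x0S add1n subn1 /= -sum_nat_cond_const.
rewrite [X in _ <= X](eq_bigl (fun x => (x \in S) && (x != x0))) => [|x]; last first.
  by rewrite !inE andbC.
by apply: leq_sum => x /andP [xS xx0]; apply: F_le.
Qed.

Lemma exists_outside (T : finType) (S : {set T}) : #|S| < #|T| -> exists y, y \notin S.
Proof.
rewrite [#|S|]cardsCs => S_small; have /card_gt0P [y] : 0 < #|~: S| by lia.
by rewrite inE; exists y.
Qed.

Section Neighbourhoods.
Variables (p : nat) (g : rel 'I_p).

Definition deg_in (A : {set 'I_p}) (x : 'I_p) : nat := #|[set y in A | g x y]|.

Definition outdeg (S : {set 'I_p}) (x : 'I_p) : nat := deg_in (~: S) x.

(* The weight of x with respect to S; summed over S it counts every edge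
   meeting S twice. *)
Definition weight (S : {set 'I_p}) (x : 'I_p) : nat := degree g x + outdeg S x.

Definition closed_nbhd (v : 'I_p) : {set 'I_p} := v |: [set y | g v y].

Lemma degree_split (A : {set 'I_p}) x : degree g x = deg_in A x + deg_in (~: A) x.
Proof.
rewrite /degree /deg_in -(cardsID A [set y | g x y]); congr (_ + _);
by apply: eq_card => y; rewrite !inE andbC.
Qed.

Lemma outdeg_le_degree (S : {set 'I_p}) x : outdeg S x <= degree g x.
Proof. by rewrite (degree_split S) leq_addl. Qed.

Lemma weight_le_double (S : {set 'I_p}) x : weight S x <= 2 * degree g x.
Proof. by rewrite /weight mul2n -addnn leq_add2l outdeg_le_degree. Qed.

Lemma outdeg_eq0 (S : {set 'I_p}) x : (forall w, g x w -> w \in S) -> outdeg S x = 0.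
Proof.
move=> nbrs_in; apply/eqP; rewrite cards_eq0; apply/eqP/setP => w; rewrite !inE.
by case gxw: (g x w); rewrite ?andbF ?(nbrs_in _ gxw).
Qed.

Lemma outdeg_mono (S S' : {set 'I_p}) x : S \subset S' -> outdeg S' x <= outdeg S x.
Proof.
move=> sub; apply/subset_leq_card/subsetP => w; rewrite !inE => /andP [wS' ->].
by rewrite andbT; apply: contra wS'; apply: (subsetP sub).
Qed.

Hypotheses (g_sym : symmetric g) (g_irr : irreflexive g).

Lemma card_closed_nbhd v : #|closed_nbhd v| = (degree g v).+1.
Proof. by rewrite cardsU1 !inE g_irr. Qed.

Lemma double_count (A B : {set 'I_p}) :
  \sum_(x in A) deg_in B x = \sum_(y in B) deg_in A y.
Proof.
rewrite /deg_in; under eq_bigr => x _ do rewrite card_set_sum.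
under [RHS]eq_bigr => y _ do rewrite card_set_sum.
rewrite exchange_big /= [RHS]big_mkcond; apply: eq_bigr => y _; rewrite big_mkcond /=.
case: (y \in B); last by rewrite big1 // => x _; case: (_ \in _).
by apply: eq_bigr => x _; rewrite g_sym; case: (x \in A).
Qed.

Lemma handshake : 2 * n_edges g = \sum_x degree g x.
Proof.
have E : n_edges g = \sum_x \sum_y (g x y && (x < y) : nat).
  by rewrite /n_edges card_set_sum (pair_bigA _ (fun x y => (g x y && (x < y) : nat))).
have E' : n_edges g = \sum_x \sum_y (g x y && (y < x) : nat).
  rewrite E exchange_big /=; apply: eq_bigr => x _; apply: eq_bigr => y _.
  by rewrite g_sym.
rewrite mul2n -addnn {1}E {}E' -big_split /=; apply: eq_bigr => x _.
rewrite /degree card_set_sum -big_split /=; apply: eq_bigr => y _.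
case: (ltngtP x y) => [||/val_inj ->]; rewrite ?andbT ?andbF ?addn0 //.
by rewrite g_irr.
Qed.

Lemma sum_degree_split (S : {set 'I_p}) :
  \sum_x degree g x = \sum_(x in S) weight S x + \sum_(x in ~: S) outdeg S x.
Proof.
rewrite (sum_split_set S) big_split /= -addnA; congr (_ + _).
under eq_bigr => x _ do rewrite (degree_split S).
by rewrite big_split /= double_count.
Qed.

Lemma crossing_edge (S : {set 'I_p}) v y : connected g ->
  v \in S -> y \notin S -> exists x z, [/\ x \in S, z \notin S & g x z].
Proof.
move=> g_conn vS yS.
case: (boolP [exists x, exists z, [&& x \in S, z \notin S & g x z]]).
  by case/existsP => x /existsP [z /and3P [xS zS gxz]]; exists x, z.
move=> /existsPn no_cross.
have S_closed : closed g (mem S).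
  apply: (intro_closed (sym_connect_sym g_sym)) => x z gxz xS; apply/negPn/negP => zS.
  by move: (no_cross x) => /existsPn /(_ z); rewrite xS zS gxz.
by move: (closed_connect S_closed (g_conn v y)); rewrite vS (negbTE yS).
Qed.
End Neighbourhoods.

(* Edge-sparse sets: n-1 vertices meeting fewer than C(n-1, 2) edges. *)
Definition sparse_set p (g : rel 'I_p) (n : nat) (S : {set 'I_p}) : Prop :=
  #|S| = n - 1 /\ \sum_(x in S) weight g S x < (n - 1) * (n - 2).

Lemma contains_of_seq p q (g : rel 'I_p) (h : rel 'I_q) (x0 : 'I_p) (s : seq 'I_p) :
  uniq s -> size s = q -> (forall i j : 'I_q, h i j -> g (nth x0 s i) (nth x0 s j)) ->
  contains g h.
Proof.
move=> s_uniq s_size hg; exists (fun i => nth x0 s i); split=> // i j /eqP.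
by rewrite nth_uniq ?s_size // => /eqP/val_inj.
Qed.

Lemma contains_degree p q (g : rel 'I_p) (h : rel 'I_q) :
  contains g h -> forall i, exists x, degree h i <= degree g x.
Proof.
move=> [f [f_inj f_hom]] i; exists (f i); rewrite /degree -(card_imset _ f_inj).
by apply/subset_leq_card/subsetP => _ /imsetP [j + ->]; rewrite !inE => /f_hom.
Qed.

Lemma T2_sym n : symmetric (T2 n).
Proof. by move=> i j; rewrite /T2 orbC. Qed.

(* T_n^2 is connected: every vertex is joined to v_0, possibly via v_(n-3). *)
Lemma T2_connected n : 4 <= n -> forall i j : 'I_n, connect (T2 n) i j.
Proof.
move=> n_ge4.
have [n_gt0 mid_lt] : 0 < n /\ n - 3 < n by split; lia.
pose root := Ordinal n_gt0; pose mid := Ordinal mid_lt.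
have root_mid : T2 n root mid by rewrite /T2 /T2_arc /= leqnn; apply/orP; left; lia.
have to_root i : connect (T2 n) root i.
  have [i0|i_gt0] := posnP i; first by rewrite (_ : i = root) //; apply: val_inj.
  have [i_le|i_gt] := leqP i (n - 3).
    by apply: connect1; rewrite /T2 /T2_arc /= i_gt0 i_le.
  apply: connect_trans (connect1 root_mid) (connect1 _).
  by rewrite /T2 /T2_arc /= eqxx /=; have := ltn_ord i; lia.
move=> i j; apply: connect_trans (to_root j).
by rewrite (sym_connect_sym (@T2_sym n)) to_root.
Qed.

(* As v_0 has degree n-3 in T_n^2, graphs of maximum degree below n-3 are
   T_n^2-free. *)
Lemma T2_free_of_small_degree p n (g : rel 'I_p) :
  4 <= n -> (forall x, degree g x < n - 3) -> ~ contains g (T2 n).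
Proof.
move=> n_ge4 deg_small /contains_degree.
have n_gt0 : 0 < n by lia.
move=> /(_ (Ordinal n_gt0)) [x]; apply/negP; rewrite -ltnNge.
apply: leq_trans (deg_small x) _.
have <- : #|[set j : 'I_n | 1 <= j < n - 2]| = n - 3 by rewrite card_interval; lia.
apply/subset_leq_card/subsetP => j; rewrite !inE /T2 /T2_arc /= => j_range.
by apply/orP; left; apply/orP; left; move: j_range; lia.
Qed.

(* T_n^2 is a root v adjacent to n-3 vertices, the last of which, u, carries
   two further leaves: distinct vertices v, t_1 .. t_(n-4), u, w1, w2 with
   these adjacencies span a copy of T_n^2. *)
Lemma contains_T2_of_seq p n (g : rel 'I_p) (v u w1 w2 : 'I_p) (t : seq 'I_p) :
  symmetric g -> 4 <= n ->
  uniq (v :: t ++ [:: u; w1; w2]) -> size t = n - 4 -> all (g v) t ->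
  g v u -> g u w1 -> g u w2 -> contains g (T2 n).
Proof.
move=> g_sym n_ge4 s_uniq t_size /allP t_nbr gvu guw1 guw2.
apply: (@contains_of_seq p n g (T2 n) v _ s_uniq).
  by rewrite /= size_cat t_size /=; lia.
set s := v :: t ++ [:: u; w1; w2].
have nth_tail k : nth v s (n - 4 + k).+1 = nth v [:: u; w1; w2] k.
  by rewrite /= nth_cat t_size ltnNge leq_addr addKn.
have T2_arc_edge (i j : 'I_n) : T2_arc i j -> g (nth v s i) (nth v s j).
  case/orP=> /andP [/eqP -> hj].
    case: (nat_of_ord j) hj => [|j'] //= hj; rewrite nth_cat t_size.
    case: ltnP => hj'; first by apply/t_nbr/mem_nth; rewrite t_size.
    by rewrite (_ : j' - (n - 4) = 0) //; lia.
  rewrite (_ : n - 3 = (n - 4 + 0).+1) ?nth_tail /=; last lia.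
  case/orP: hj => /eqP ->.
    by rewrite (_ : n - 2 = (n - 4 + 1).+1) ?nth_tail //; lia.
  by rewrite (_ : n - 1 = (n - 4 + 2).+1) ?nth_tail //; lia.
by move=> i j /orP [/T2_arc_edge // | /T2_arc_edge]; rewrite g_sym.
Qed.

Definition clique_sub p (g : rel 'I_p) (S : {set 'I_p}) : rel 'I_p :=
  fun x y => if x \in S then (y \in S) && (x != y) else (y \notin S) && g x y.

Section CliqueSubstitution.
Variables (p : nat) (g : rel 'I_p) (S : {set 'I_p}).
Hypotheses (g_sym : symmetric g) (g_irr : irreflexive g).

Lemma clique_sub_simple : simple_graph (clique_sub g S).
Proof.
split=> [x y|x]; rewrite /clique_sub; last by case: (x \in S); rewrite ?eqxx ?g_irr !andbF.
by case: (boolP (x \in S)); case: (boolP (y \in S)) => //= _ _; rewrite ?(eq_sym x) ?g_sym.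
Qed.

Lemma clique_sub_same_side x y : clique_sub g S x y -> (x \in S) = (y \in S).
Proof. by rewrite /clique_sub; case: (x \in S); case: (y \in S). Qed.

(* A connected graph h on more than #|S| vertices embeds in the clique
   substitution only if it embeds in g: its image lies on one side of S. *)
Lemma clique_sub_free q (h : rel 'I_q) :
  (forall i j, connect h i j) -> #|S| < q -> ~ contains g h -> ~ contains (clique_sub g S) h.
Proof.
move=> h_conn S_small g_free [f [f_inj f_hom]].
pose i0 := Ordinal (leq_ltn_trans (leq0n #|S|) S_small).
have side i : (f i \in S) = (f i0 \in S).
  apply/esym/(closed_connect (e := h) (a := [pred i | f i \in S])) => //.
  by move=> j k /f_hom /clique_sub_same_side.
case: (boolP (f i0 \in S)) => fi0S.
  have : [set f i | i in 'I_q] \subset S by apply/subsetP => _ /imsetP [i _ ->]; rewrite side.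
  by move/subset_leq_card; rewrite card_imset // card_ord leqNgt S_small.
apply: g_free; exists f; split=> // i j /f_hom; rewrite /clique_sub side (negbTE fi0S).
by case/andP.
Qed.

Lemma degree_clique_sub x :
  degree (clique_sub g S) x = if x \in S then #|S| - 1 else outdeg g S x.
Proof.
rewrite /degree /clique_sub; case: (boolP (x \in S)) => xS.
  by rewrite (cardsD1 x S) xS add1n subn1 /=; apply: eq_card => y; rewrite !inE andbC eq_sym.
by apply: eq_card => y; rewrite !inE.
Qed.

Lemma sum_degree_clique_sub :
  \sum_x degree (clique_sub g S) x = #|S| * (#|S| - 1) + \sum_(x in ~: S) outdeg g S x.
Proof.
rewrite (sum_split_set S) -sum_nat_const; congr (_ + _); apply: eq_bigr => x.
  by rewrite degree_clique_sub => ->.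
by rewrite degree_clique_sub inE => /negbTE ->.
Qed.
End CliqueSubstitution.

(* Replacement argument: in an extremal L-free graph, with L connected on q
   vertices, a set S of fewer than q vertices meets at least C(#|S|, 2)
   edges; otherwise the clique substitution would be a larger L-free graph. *)
Lemma extremal_weight_bound p q (L : rel 'I_q) (g : rel 'I_p) (S : {set 'I_p}) :
  in_Ex L g -> (forall i j, connect L i j) -> #|S| < q ->
  #|S| * (#|S| - 1) <= \sum_(x in S) weight g S x.
Proof.
move=> [[g_sym g_irr] [g_free g_max]] L_conn S_small.
have [h_sym h_irr] := clique_sub_simple S g_sym g_irr.
have := g_max _ (conj h_sym h_irr) (clique_sub_free L_conn S_small g_free).
rewrite -(leq_pmul2l (isT : 0 < 2)) !handshake //.
by rewrite sum_degree_clique_sub (sum_degree_split g_sym S) leq_add2r.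
Qed.

Section Forks.
Variables (p n : nat) (g : rel 'I_p).
Hypotheses (g_sym : symmetric g) (g_irr : irreflexive g).
Hypotheses (g_free : ~ contains g (T2 n)) (n_ge4 : 4 <= n).

Lemma neq_of_edge x y : g x y -> x != y.
Proof. by apply: contraTneq => ->; rewrite g_irr. Qed.

(* The neighbours of v outside {u, w1, w2}, with v, u, w1, w2, would span a
   copy of T_n^2 if there were n-4 of them; hence deg v is less than n-4
   plus the size k of any set C covering N(v) n {u, w1, w2}. *)
Lemma fork_bound v u w1 w2 (C : {set 'I_p}) k :
  g v u -> g u w1 -> g u w2 -> w1 != w2 -> w1 != v -> w2 != v ->
  [set x | g v x] :&: [set u; w1; w2] \subset C -> #|C| <= k -> degree g v < n - 4 + k.
Proof.
move=> gvu guw1 guw2 w12 w1v w2v sub_C card_C; rewrite ltnNge; apply/negP => deg_v.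
have : n - 4 <= #|[set x | g v x] :\: [set u; w1; w2]|.
  rewrite cardsD; have := leq_trans (subset_leq_card sub_C) card_C.
  by move: deg_v; rewrite /degree; lia.
case/card_geqP => t [t_uniq t_size t_sub].
apply: g_free; apply: (contains_T2_of_seq g_sym n_ge4 _ t_size _ gvu guw1 guw2).
  rewrite /= cat_uniq t_uniq /= !inE !negb_or mem_cat !inE !negb_or.
  rewrite (neq_of_edge gvu) (neq_of_edge guw1) (neq_of_edge guw2).
  rewrite (eq_sym v w1) (eq_sym v w2) w1v w2v w12 !andbT.
  by apply/and4P; split; apply/negP => /t_sub; rewrite !inE ?g_irr ?eqxx ?orbT ?andbF.
by apply/allP => x /t_sub; rewrite !inE => /andP [].
Qed.

Lemma degree_le2_near_huge v u : n - 1 <= degree g v -> g v u -> degree g u <= 2.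
Proof.
move=> deg_v gvu; rewrite leqNgt; apply/negP => deg_u.
have : 1 < #|[set y | g u y] :\ v|.
  by move: deg_u; rewrite /degree (cardsD1 v); case: (v \in _) => /=; lia.
case/card_gt1P => w1 [w2 [/setD1P [w1v guw1] /setD1P [w2v guw2] w12]].
rewrite !inE in guw1 guw2.
have := fork_bound gvu guw1 guw2 w12 w1v w2v (subsetIr _ _) (card_le3 u w1 w2); lia.
Qed.

Lemma degree_le2_near_large v u w : n - 2 <= degree g v -> g v u -> g u w ->
  w \notin closed_nbhd g v -> degree g u <= 2.
Proof.
move=> deg_v gvu guw; rewrite !inE negb_or => /andP [wv nvw].
rewrite leqNgt; apply/negP => deg_u.
have : 0 < #|[set y | g u y] :\: [set v; w]|.
  rewrite cardsD; have := subset_leq_card (subsetIr [set y | g u y] [set v; w]).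
  by rewrite cards2 /degree in deg_u *; case: (v != w); lia.
case/card_gt0P => w' /setDP []; rewrite !inE negb_or => guw' /andP [w'v w'w].
have ww' : w != w' by rewrite eq_sym.
have sub : [set x | g v x] :&: [set u; w; w'] \subset [set u; w'].
  apply/subsetP => x; rewrite !inE => /andP [gvx].
  by case/orP => [/orP [] | ] /eqP ex; rewrite ex ?eqxx ?orbT //; move: nvw; rewrite -ex gvx.
have card_sub : #|[set u; w']| <= 2 by rewrite cards2; case: (u != w').
have := fork_bound gvu guw guw' ww' wv w'v sub card_sub; lia.
Qed.

Lemma outdeg_le1_near_big v u : n - 3 <= degree g v -> g v u ->
  outdeg g (closed_nbhd g v) u <= 1.
Proof.
move=> deg_v gvu; rewrite leqNgt; apply/negP.
case/card_gt1P => w1 [w2 []]; rewrite !inE !negb_or.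
move=> /andP [/andP [w1v nvw1] guw1] /andP [/andP [w2v nvw2] guw2] w12.
have sub : [set x | g v x] :&: [set u; w1; w2] \subset [set u].
  apply/subsetP => x; rewrite !inE => /andP [gvx].
  by case/orP => [/orP [] | ] /eqP ex //; [move: nvw1 | move: nvw2]; rewrite -ex gvx.
have := fork_bound gvu guw1 guw2 w12 w1v w2v sub (eq_leq (cards1 u)); lia.
Qed.
End Forks.

Section HighDegree.
Variables (p n : nat) (g : rel 'I_p).
Hypotheses (g_sym : symmetric g) (g_irr : irreflexive g).
Hypotheses (g_free : ~ contains g (T2 n)) (n_ge7 : 7 <= n).

Let n_ge4 : 4 <= n. Proof. exact: leq_trans n_ge7. Qed.

(* Case deg v >= n-1: n-1 neighbours of v, each of degree at most 2, form a
   set of weight at most 4(n-1). *)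
Lemma sparse_set_near_huge v : n - 1 <= degree g v -> exists S, sparse_set g n S.
Proof.
move=> deg_v; have /card_geqP [s [s_uniq s_size s_nbrs]] := deg_v.
exists [set x in s]; split; first by rewrite cardsE (card_uniqP s_uniq).
apply: (@leq_ltn_trans (\sum_(x in [set x in s]) 4)).
  apply: leq_sum => x; rewrite inE => /s_nbrs; rewrite inE => gvx.
  apply: leq_trans (weight_le_double _ _ _) _.
  by have := degree_le2_near_huge g_sym g_irr g_free n_ge4 deg_v gvx; lia.
by rewrite sum_nat_const cardsE (card_uniqP s_uniq) s_size; nia.
Qed.

(* Case deg v = n-2 maximal, g connected: the closed neighbourhood S of v
   has n-1 vertices and some vertex x0 of S has a neighbour outside S. Such
   vertices have weight at most 4, the others weight deg x <= n-2. *)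
Lemma sparse_set_near_large v : connected g -> n <= p ->
  (forall x, degree g x <= degree g v) -> degree g v = n - 2 ->
  exists S, sparse_set g n S.
Proof.
move=> g_conn n_le_p v_max deg_v; set S := closed_nbhd g v.
have card_S : #|S| = n - 1 by rewrite card_closed_nbhd // deg_v; lia.
have vS : v \in S by rewrite !inE eqxx.
have [y yS] := exists_outside (S := S) ltac:(rewrite card_ord; lia).
have [x0 [z [x0S zS gx0z]]] := crossing_edge g_sym g_conn vS yS.
have nbr_S x : g v x -> x \in S by rewrite !inE orbC => ->.
have leaving_light x w : x \in S -> g x w -> w \notin S -> weight g S x <= 4.
  move=> xS gxw wS; have gvx : g v x.
    move: xS; rewrite !inE => /orP [/eqP xv | //].
    by move: wS; rewrite xv in gxw; rewrite nbr_S.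
  apply: leq_trans (weight_le_double _ _ _) _.
  have := degree_le2_near_large g_sym g_irr g_free n_ge4 (eq_leq (esym deg_v)) gvx gxw wS.
  by lia.
exists S; split=> //.
apply: (@leq_ltn_trans (4 + (#|S| - 1) * (n - 2))); last by rewrite card_S; nia.
apply: sum_le_with_exception x0S (leaving_light _ _ x0S gx0z zS) _ => x xS _.
case: (boolP [exists w, g x w && (w \notin S)]) => [/existsP [w /andP [gxw wS]] | ].
  by have := leaving_light _ _ xS gxw wS; lia.
move=> /existsPn no_out; rewrite /weight outdeg_eq0 ?addn0 -?deg_v // => w gxw.
by apply/negPn; apply: contraNN (no_out w) => wS; rewrite gxw.
Qed.

Section DegreeNminus3.
Variable v : 'I_p.
Hypotheses (v_max : forall x, degree g x <= degree g v) (deg_v : degree g v = n - 3).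

Let deg_v_ge : n - 3 <= degree g v. Proof. by rewrite deg_v. Qed.

Lemma card_closed_nbhd_add a : a \notin closed_nbhd g v -> #|a |: closed_nbhd g v| = n - 1.
Proof. by move=> aN; rewrite cardsU1 aN card_closed_nbhd // deg_v; lia. Qed.

Lemma weight_center (S : {set 'I_p}) : closed_nbhd g v \subset S -> weight g S v = n - 3.
Proof.
move=> sub; rewrite /weight outdeg_eq0 ?addn0 // => w gvw.
by apply: (subsetP sub); rewrite !inE gvw orbT.
Qed.

Lemma weight_nbr_le (S : {set 'I_p}) x :
  closed_nbhd g v \subset S -> g v x -> weight g S x <= degree g x + 1.
Proof.
move=> sub gvx; rewrite leq_add2l (leq_trans (outdeg_mono _ _ sub)) //.
exact (outdeg_le1_near_big g_sym g_irr g_free n_ge4 deg_v_ge gvx).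
Qed.

(* In S = N + a, v has weight n-3 and all other
   vertices weight at most n-2: a has at most one neighbour outside S, as
   such a neighbour lies outside the closed neighbourhood of u (u has no
   neighbour outside N besides a). *)
Lemma sparse_set_rich u a : g v u -> degree g u = n - 3 -> g u a ->
  a \notin closed_nbhd g v -> exists S, sparse_set g n S.
Proof.
move=> gvu deg_u gua aN; set N := closed_nbhd g v; set S := a |: N.
have sub : N \subset S by apply: subsetUr.
have u_out1 := outdeg_le1_near_big g_sym g_irr g_free n_ge4 deg_v_ge gvu.
have a_out1 : outdeg g S a <= 1.
  apply: leq_trans (outdeg_le1_near_big g_sym g_irr g_free n_ge4 (eq_leq (esym deg_u)) gua).
  apply/subset_leq_card/subsetP => w; rewrite !inE negb_or => /andP [/andP [wa wN] gaw].
  rewrite gaw andbT negb_or; apply/andP; split.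
    by apply: contraNneq wN => ->; rewrite gvu orbT.
  apply/negP => guw; move: u_out1; rewrite leqNgt => /negP; apply; apply/card_gt1P.
  by exists a, w; move: aN; rewrite !inE => -> /=; rewrite wN gua guw eq_sym wa.
have card_S : #|S| = n - 1 by apply: card_closed_nbhd_add.
have vS : v \in S by apply: (subsetP sub); rewrite !inE eqxx.
exists S; split=> //.
apply: (@leq_ltn_trans (n - 3 + (#|S| - 1) * (n - 2))); last by rewrite card_S; nia.
apply: sum_le_with_exception vS (eq_leq (weight_center sub)) _ => x.
rewrite !inE => /orP [/eqP -> _ | /orP [/eqP -> | gvx _]].
- by have := v_max a; rewrite /weight; lia.
- by rewrite eqxx.
by have := weight_nbr_le sub gvx; have := v_max x; lia.
Qed.

(* Subcase: every neighbour of v with a neighbour outside the closed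
   neighbourhood N of v has degree at most n-4. For any vertex a outside N,
   S = N + a has weights at most n-3 on N and at most 2(n-3) at a. *)
Lemma sparse_set_poor : n <= p ->
  (forall u w, g v u -> g u w -> w \notin closed_nbhd g v -> degree g u != n - 3) ->
  exists S, sparse_set g n S.
Proof.
move=> n_le_p poor; set N := closed_nbhd g v.
have [a aN] : exists a, a \notin N.
  by apply: exists_outside; rewrite card_closed_nbhd // deg_v card_ord; lia.
set S := a |: N; have sub : N \subset S by apply: subsetUr.
have card_S : #|S| = n - 1 by apply: card_closed_nbhd_add.
have aS : a \in S by rewrite !inE eqxx.
exists S; split=> //.
apply: (@leq_ltn_trans (2 * (n - 3) + (#|S| - 1) * (n - 3))); last by rewrite card_S; nia.
apply: sum_le_with_exception aS _ _.
  by apply: leq_trans (weight_le_double _ _ _) _; rewrite -deg_v leq_pmul2l.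
move=> x; rewrite !inE => /orP [/eqP -> | /orP [/eqP -> _ | gvx _]].
- by rewrite eqxx.
- by rewrite weight_center.
have [out0 | /card_gt0P [w]] := posnP (outdeg g S x).
  by rewrite /weight out0 addn0 -deg_v.
rewrite inE => /andP []; rewrite inE in_setU1 negb_or => /andP [_ wN] gxw.
have := poor x w gvx gxw wN; have := weight_nbr_le sub gvx; have := v_max x; lia.
Qed.
End DegreeNminus3.

Lemma sparse_set_near_big v : n <= p ->
  (forall x, degree g x <= degree g v) -> degree g v = n - 3 ->
  exists S, sparse_set g n S.
Proof.
move=> n_le_p v_max deg_v.
case: (boolP [exists u, exists w,
    [&& g v u, g u w, w \notin closed_nbhd g v & degree g u == n - 3]]).
  case/existsP => u /existsP [w /and4P [gvu guw wN /eqP deg_u]].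
  exact (sparse_set_rich v_max deg_v gvu deg_u guw wN).
move=> /existsPn poor; apply: sparse_set_poor v_max deg_v n_le_p _ => u w gvu guw wN.
by apply: contra (poor u) => deg_u; apply/existsP; exists w; rewrite gvu guw wN.
Qed.
End HighDegree.

(* Upper bound: a connected extremal T_n^2-free graph on p >= n >= 7 vertices
   has maximum degree at most n-4, since a vertex of maximum degree >= n-3
   would yield a sparse set, contradicting the replacement argument. *)
Lemma max_degree_le p n (g : rel 'I_p) :
  in_Ex (T2 n) g -> connected g -> 7 <= n -> n <= p -> max_degree g <= n - 4.
Proof.
move=> g_ex g_conn n_ge7 n_le_p; have [[g_sym g_irr] [g_free _]] := g_ex.
have [v max_v] := @eq_bigmax _ (degree g) ltac:(rewrite card_ord; lia).
have v_max x : degree g x <= degree g v by rewrite -max_v; apply: leq_bigmax.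
rewrite /max_degree max_v leqNgt; apply/negP => deg_v.
have [S [card_S light]] : exists S, sparse_set g n S.
  have [huge|not_huge] := leqP (n - 1) (degree g v).
    exact (sparse_set_near_huge g_sym g_irr g_free n_ge7 huge).
  have [large|not_large] := eqVneq (degree g v) (n - 2).
    exact (sparse_set_near_large g_sym g_irr g_free n_ge7 g_conn n_le_p v_max large).
  have deg_v3 : degree g v = n - 3 by move/eqP: not_large; lia.
  exact (sparse_set_near_big g_sym g_irr g_free n_ge7 n_le_p v_max deg_v3).
have [n_ge4 S_small] : 4 <= n /\ #|S| < n by rewrite card_S; split; lia.
have := extremal_weight_bound g_ex (T2_connected n_ge4) S_small.
rewrite card_S (_ : n - 1 - 1 = n - 2); last lia.
by move=> bound; have := leq_ltn_trans bound light; rewrite ltnn.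
Qed.

(* Circular distance from x to y on Z_p, i.e. (y - x) mod p. *)
Definition fwd_dist p (x y : nat) : nat := if x <= y then y - x else p - (x - y).

(* d or -d lies in [1, m] modulo p. *)
Definition short_step p m (d : nat) : bool := (0 < d) && ((d <= m) || (p - m <= d)).

(* x and y are antipodal on the cycle 0 .. 2(p/2)-1. *)
Definition antipodal p (x y : nat) : bool :=
  ((x < p %/ 2) && (y == x + p %/ 2)) || ((y < p %/ 2) && (x == y + p %/ 2)).

Definition circulant p k : rel 'I_p :=
  fun x y => short_step p (k %/ 2) (fwd_dist p x y) || odd k && antipodal p x y.
Arguments circulant : clear implicits.

Section Circulant.
Variables (p k : nat).
Hypothesis k_lt_p : k < p.

Lemma circulant_simple : simple_graph (circulant p k).
Proof.
split=> [[x x_lt] [y y_lt]|[x x_lt]];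
  rewrite /circulant /short_step /fwd_dist /antipodal /= ?leqnn ?subnn /=; last lia.
by case: ifP; case: ifP => *; lia.
Qed.

Lemma card_short_steps : #|[set t : 'I_p | short_step p (k %/ 2) t]| = 2 * (k %/ 2).
Proof.
rewrite card_set_sum (eq_bigr (fun t : 'I_p =>
  ((1 <= t < (k %/ 2).+1) : nat) + ((p - k %/ 2 <= t < p) : nat))); last first.
  move=> t _; have := ltn_ord t; rewrite /short_step.
  by case: (boolP (0 < t)); case: (boolP (t <= k %/ 2)); case: (boolP (p - k %/ 2 <= t)); lia.
by rewrite big_split /= -!card_set_sum !card_interval //; lia.
Qed.

(* y |-> (y - x) mod p is a bijection of Z_p, so every vertex has 2(k/2)
   short-step neighbours. *)
Lemma card_short_nbrs (x : 'I_p) :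
  #|[set y : 'I_p | short_step p (k %/ 2) (fwd_dist p x y)]| = 2 * (k %/ 2).
Proof.
have dist_lt (y : 'I_p) : fwd_dist p x y < p.
  by rewrite /fwd_dist; have := ltn_ord x; have := ltn_ord y; case: ifP; lia.
pose rot y := Ordinal (dist_lt y).
have rot_inj : injective rot.
  move=> y z /(congr1 val) /=; rewrite /fwd_dist => E; apply: ord_inj; move: E.
  by have := ltn_ord x; have := ltn_ord y; have := ltn_ord z; case: ifP; case: ifP => *; lia.
rewrite -card_short_steps -[RHS](card_preimset _ rot_inj).
by apply: eq_card => y; rewrite !inE.
Qed.

Lemma card_antipodes (x : 'I_p) :
  #|[set y : 'I_p | antipodal p x y]| = (x < 2 * (p %/ 2)).
Proof.
have [x_low|x_high] := ltnP x (p %/ 2).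
  have lt : x + p %/ 2 < p by lia.
  rewrite (_ : x < _) ?(eq_card (B := pred1 (Ordinal lt))) ?card1 //; last lia.
  by move=> y; rewrite !inE -val_eqE /antipodal /=; lia.
have [x_mid|x_top] := ltnP x (2 * (p %/ 2)).
  have lt : x - p %/ 2 < p by lia.
  rewrite (eq_card (B := pred1 (Ordinal lt))) ?card1 //.
  by move=> y; rewrite !inE -val_eqE /antipodal /=; lia.
by rewrite (eq_card (B := pred0)) ?card0 // => y; rewrite !inE /antipodal; lia.
Qed.

(* For odd k the short steps (at most (k-1)/2 < p/2) and the antipodal
   matching are disjoint, so the degrees add up. *)
Lemma degree_circulant x :
  degree (circulant p k) x = 2 * (k %/ 2) + (odd k && (x < 2 * (p %/ 2))).
Proof.
rewrite /degree -(card_short_nbrs x).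
case: (boolP (odd k)) => k_odd /=; last first.
  by rewrite addn0; apply: eq_card => y; rewrite !inE /circulant (negbTE k_odd) orbF.
rewrite -card_antipodes -cardsUI [_ :&: _](_ : _ = set0) ?cards0 ?addn0.
  by apply: eq_card => y; rewrite !inE /circulant k_odd.
apply/setP => y; rewrite !inE /short_step /fwd_dist /antipodal.
have := ltn_ord x; have := ltn_ord y; have := odd_double_half k; rewrite k_odd.
by case: ifP => *; lia.
Qed.

Lemma circulant_degree_le x : degree (circulant p k) x <= k.
Proof. by rewrite degree_circulant; have := odd_double_half k; case: (odd k) => /=; lia. Qed.

Lemma circulant_edges : k * p <= 2 * n_edges (circulant p k) + 1.
Proof.
have [c_sym c_irr] := circulant_simple.
rewrite handshake //; under eq_bigr => x _ do rewrite degree_circulant.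
rewrite big_split /= sum_nat_const card_ord.
have -> : \sum_(x < p) (odd k && (x < 2 * (p %/ 2)) : nat) = odd k * (2 * (p %/ 2)).
  case: (odd k); last by rewrite big1.
  by rewrite mul1n -card_set_sum (card_interval 0) //; lia.
have := odd_double_half k; have := odd_double_half p.
by case: (odd k); case: (odd p) => /=; nia.
Qed.
End Circulant.

(* Lower bound: the circulant graph of maximum degree n-4 is T_n^2-free, so
   an extremal graph has at least ((n-4)p - 1)/2 edges. *)
Lemma extremal_edges_ge p n (g : rel 'I_p) :
  in_Ex (T2 n) g -> 7 <= n -> n <= p -> (n - 4) * p <= 2 * n_edges g + 1.
Proof.
move=> [_ [_ g_max]] n_ge7 n_le_p; have k_lt_p : n - 4 < p by lia.
apply: leq_trans (circulant_edges k_lt_p) _; rewrite leq_add2r leq_pmul2l //.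
apply: g_max; first exact: circulant_simple.
apply: T2_free_of_small_degree => [|x]; first lia.
by have := circulant_degree_le k_lt_p x; lia.
Qed.

Lemma edges_le_max_degree p (g : rel 'I_p) :
  simple_graph g -> 2 * n_edges g <= p * max_degree g.
Proof.
move=> [g_sym g_irr]; rewrite handshake //.
apply: leq_trans (_ : _ <= \sum_(x < p) max_degree g) _.
  by apply: leq_sum => x _; apply: leq_bigmax.
by rewrite sum_nat_const card_ord.
Qed.

Theorem lemma3p3 (p n : nat) (g : rel 'I_p) :
  7 <= n -> n <= p -> in_Ex (T2 n) g -> connected g ->
  max_degree g = n - 4 /\ n_edges g = ((n - 4) * p) %/ 2.
Proof.
move=> n_ge7 n_le_p g_ex g_conn.
have deg_le := max_degree_le g_ex g_conn n_ge7 n_le_p.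
have edges_ge := extremal_edges_ge g_ex n_ge7 n_le_p.
have edges_le := edges_le_max_degree g_ex.1.
have deg_eq : max_degree g = n - 4.
  apply/eqP; rewrite eqn_leq deg_le leqNgt; apply/negP => deg_lt.
  have := leq_mul (leqnn p) deg_lt; nia.
by split=> //; rewrite deg_eq in edges_le; lia.
Qed.
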